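(* Let $q\ge2$ be an integer and $m\ge0$ an integer. Then, in base $q$, $$a_{q^m}=q^m\left(2q^{\frac{q^m-1}{q-1}}-1\right).$$ In particular, for $q=2$, $a_{2^m}=2^m\left(2^{2^m}-1\right)$.
   Context: For an integer base $q\ge2$, $s_q(m)$ denotes the sum of the base-$q$ digits of $m$, and $a_k$ denotes the smallest positive multiple of $k$ with $s_q(a_k)=k$. *)

From mathcomp Require Import all_boot.
Set Implicit Arguments. Unset Strict Implicit. Unset Printing Implicit Defensive.

(* Sum of base-q digits of n, computed with fuel (n itself suffices as fuel
   when q >= 2, since each step divides by q and n %/ q < n for n > 0). *)
Fixpoint digsum_aux (q fuel n : nat) : nat :=
  match fuel with
  | 0 => 0
  | f.+1 => if n is 0 then 0 else n %% q + digsum_aux q f (n %/ q)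
  end.

Definition digsum (q n : nat) : nat := digsum_aux q n n.

(* [is_a q k a] : a is the smallest positive multiple of k with s_q(a) = k,
   i.e. a = a_k in base q. *)
Definition is_a (q k a : nat) : Prop :=
  [/\ 0 < a, k %| a, digsum q a = k &
      forall b, 0 < b -> k %| b -> digsum q b = k -> a <= b].

From mathcomp Require Import all_boot zify.

(* Write s = digsum q and t_N = 2 q^N - 1, whose base-q expansion
   is the digit 1 followed by N digits q-1, so s(t_N) = N(q-1) + 1.  Moreover
   t_N is the least number with that digit sum: every c < t_N satisfies
   s(c) <= N(q-1), by induction on N, peeling off the last digit of c.
   Since s(q^m c) = s(c), a positive multiple q^m c of q^m has digit sum q^m
   exactly when s(c) = q^m.  Taking N = (q^m - 1)/(q - 1), so that
   N(q-1) + 1 = q^m, the least such c is t_N, hence a_{q^m} = q^m t_N. *)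

Section DigitSum.

Variable q : nat.
Hypothesis q_gt1 : 1 < q.

Let q_gt0 : 0 < q. Proof. exact: ltnW. Qed.

Lemma digsum_aux_fuel f g n : n <= f -> n <= g ->
  digsum_aux q f n = digsum_aux q g n.
Proof.
elim: f g n => [|f IH] [|g] [|n] //= le_nf le_ng; congr (_ + _).
have lt_div : n.+1 %/ q < n.+1 by rewrite ltn_Pdiv.
by apply: IH; rewrite -ltnS (leq_trans lt_div).
Qed.

Lemma digsumE n :
  digsum q n = if n is 0 then 0 else n %% q + digsum q (n %/ q).
Proof.
rewrite /digsum; case: n => [|n] //=; congr (_ + _).
by apply: digsum_aux_fuel => //; rewrite -ltnS ltn_Pdiv.
Qed.

Lemma digsum_pos n : 0 < n -> digsum q n = n %% q + digsum q (n %/ q).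
Proof. by rewrite digsumE; case: n. Qed.

Lemma digsum_mulq c : digsum q (q * c) = digsum q c.
Proof.
case: c => [|c]; first by rewrite muln0.
by rewrite digsum_pos ?muln_gt0 ?q_gt0 // mulKn // modnMr.
Qed.

Lemma digsum_mulX m c : digsum q (q ^ m * c) = digsum q c.
Proof.
elim: m => [|m IH]; first by rewrite mul1n.
by rewrite expnS -mulnA digsum_mulq.
Qed.

(* t_(N+1) is t_N followed by the digit q - 1. *)
Lemma top_step N : (2 * q ^ N.+1).-1 = (2 * q ^ N).-1 * q + q.-1.
Proof.
have : 0 < q ^ N by rewrite expn_gt0 q_gt0.
by rewrite expnS; move: (q ^ N) => x; nia.
Qed.

Lemma top_quo N : (2 * q ^ N.+1).-1 %/ q = (2 * q ^ N).-1.
Proof. by rewrite top_step divnMDl // divn_small ?addn0 // ltn_predL. Qed.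

Lemma digsum_top N : digsum q (2 * q ^ N).-1 = N * q.-1 + 1.
Proof.
elim: N => [|N IH]; first by rewrite /digsum /= modn_small.
rewrite digsum_pos ?top_quo ?IH; last first.
  by rewrite top_step addn_gt0 orbC -subn1 subn_gt0 q_gt1.
by rewrite top_step modnMDl modn_small ?ltn_predL // mulSn addnA.
Qed.

Lemma digsum_lt_top N c : c < (2 * q ^ N).-1 -> digsum q c <= N * q.-1.
Proof.
elim: N c => [|N IH] c; first by rewrite expn0; case: c.
case: c => [|c]; first by rewrite digsumE.
set d := c.+1 => lt_d_top; rewrite digsum_pos // mulSn.
have le_last : d %% q <= q.-1 by rewrite -ltnS prednK ?ltn_mod.
have [lt_quo | ge_quo] := ltnP (d %/ q) (2 * q ^ N).-1.
  by apply: leq_add => //; apply: IH.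
(* Otherwise d %/ q = t_N, and the last digit of d is below q - 1. *)
have le_quo : d %/ q <= (2 * q ^ N).-1.
  by rewrite -top_quo leq_div2r // ltnW.
have eq_quo : d %/ q = (2 * q ^ N).-1 by apply/eqP; rewrite eqn_leq le_quo.
have lt_last : d %% q < q.-1.
  by move: lt_d_top; rewrite {1}(divn_eq d q) eq_quo top_step ltn_add2l.
by rewrite eq_quo digsum_top addnA addn1 ltn_add2r.
Qed.

End DigitSum.

Lemma geometric_count q m : 1 < q ->
  (q ^ m).-1 %/ q.-1 * q.-1 + 1 = q ^ m.
Proof.
move=> q_gt1; have q_gt0 : 0 < q := ltnW q_gt1.
have pred_gt0 : 0 < q.-1 by rewrite -subn1 subn_gt0.
rewrite predn_exp mulKn // mulnC -predn_exp addn1 prednK //.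
by rewrite expn_gt0 q_gt0.
Qed.

Theorem mainTheorem15 (q m : nat) (hq : 2 <= q) :
  is_a q (q ^ m) (q ^ m * (2 * q ^ ((q ^ m - 1) %/ (q - 1)) - 1)).
Proof.
rewrite !subn1; set N := (q ^ m).-1 %/ q.-1.
have count : N * q.-1 + 1 = q ^ m by exact: geometric_count.
have top_gt0 : 0 < (2 * q ^ N).-1.
  by rewrite -subn1 subn_gt0 (@leq_pmul2l 2 1) // expn_gt0 (ltnW hq).
split.
- by rewrite muln_gt0 expn_gt0 top_gt0 (ltnW hq).
- exact: dvdn_mulr.
- by rewrite digsum_mulX // digsum_top.
move=> _ _ /dvdnP [c ->]; rewrite mulnC digsum_mulX // => sum_c.
rewrite leq_mul2l leqNgt; apply/orP; right; apply/negP.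
by move=> /(digsum_lt_top q hq); rewrite sum_c -count addn1 ltnn.
Qed.
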